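(* Let $X$ be a cycle set. Then the following are equivalent: (1) $X$ is irreducible; (2) there is a finite brace $B$ such that $X\subseteq B$, $X=\{\lambda_b(x)\mid b\in B\}$ and $B=B(x)$ for all $x\in X$.
   Context: A cycle set is a non-empty set $X$ with a binary operation $\cdot$ such that each map $\sigma_x\colon y\mapsto x\cdot y$ is bijective and $(x\cdot y)\cdot(x\cdot z)=(y\cdot x)\cdot(y\cdot z)$ for all $x,y,z\in X$ (equivalently, a q-cycle set $(X,\cdot,:)$ in which the operations $\cdot$ and $:$ coincide). A sub-cycle set of $X$ is a subset closed under the induced structure, i.e. a subset $Y$ that with the operation induced by $\cdot$ is again a cycle set. $X$ is irreducible if $\emptyset$ and $X$ are its only sub-cycle sets. A brace is a triple $(B,+,\circ)$ where $(B,+)$ is an abelian group, $(B,\circ)$ is a group and $a\circ(b+c)=a\circ b-a+a\circ c$ for all $a,b,c\in B$. For $b\in B$, $\lambda_b\colon B\to B$ is the map $\lambda_b(a)=-b+b\circ a$. A brace $B$ carries the cycle set structure $a\cdot c:=\lambda_{a^-}(c)$, where $a^-$ is the inverse of $a$ in $(B,\circ)$, and in (2) $X$ is a sub-cycle set of $B$ with this structure. For $x\in B$, $B(x)$ denotes the smallest sub-brace of $B$ containing $x$. *)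

From mathcomp Require Import all_boot.
Set Implicit Arguments. Unset Strict Implicit. Unset Printing Implicit Defensive.

Definition is_cycle_set (X : finType) (op : X -> X -> X) : Prop :=
  (forall x : X, bijective (op x)) /\
  (forall x y z : X, op (op x y) (op x z) = op (op y x) (op y z)).

(* The empty set is
   allowed, as in the definition of irreducibility. *)
Definition is_sub_cycle_set (X : finType) (op : X -> X -> X) (Y : {set X}) : Prop :=
  (forall x y, x \in Y -> y \in Y -> op x y \in Y) /\
  (forall x, x \in Y -> {in Y &, injective (op x)}) /\
  (forall x, x \in Y -> forall z, z \in Y -> exists2 y, y \in Y & op x y = z) /\
  (forall x y z, x \in Y -> y \in Y -> z \in Y ->
     op (op x y) (op x z) = op (op y x) (op y z)).

Definition irreducible_cs (X : finType) (op : X -> X -> X) : Prop :=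
  forall Y : {set X}, is_sub_cycle_set op Y -> Y = set0 \/ Y = setT.

Record fin_brace := FinBrace {
  bcar :> finType;
  badd : bcar -> bcar -> bcar;
  bzero : bcar;
  bopp : bcar -> bcar;
  bcirc : bcar -> bcar -> bcar;
  bone : bcar;
  binv : bcar -> bcar;
  baddA : forall a b c, badd a (badd b c) = badd (badd a b) c;
  baddC : forall a b, badd a b = badd b a;
  badd0 : forall a, badd bzero a = a;
  baddN : forall a, badd (bopp a) a = bzero;
  bcircA : forall a b c, bcirc a (bcirc b c) = bcirc (bcirc a b) c;
  bcirc1 : forall a, bcirc bone a = a;
  bcircV : forall a, bcirc (binv a) a = bone;
  bcomp : forall a b c,
    bcirc a (badd b c) = badd (badd (bcirc a b) (bopp a)) (bcirc a c)
}.

Definition blambda (B : fin_brace) (b a : B) : B :=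
  badd (bopp b) (bcirc b a).

(* the cycle set structure of a brace: a . c = lambda_{a^-}(c) *)
Definition bdot (B : fin_brace) (a c : B) : B := blambda (binv a) c.

Definition is_subbrace (B : fin_brace) (S : {set B}) : bool :=
  [&& @bzero B \in S, @bone B \in S,
      [forall a in S, forall b in S, badd a b \in S],
      [forall a in S, bopp a \in S],
      [forall a in S, forall b in S, bcirc a b \in S] &
      [forall a in S, binv a \in S]].

Definition brace_gen (B : fin_brace) (x : B) : {set B} :=
  \bigcap_(S : {set B} | is_subbrace S && (x \in S)) S.

(* (2) => (1): for a non-empty sub-cycle set Y, the g in B with lambda_g (f Y) ⊆ f Y
   form a subgroup G of (B, ∘) containing f Y, and the elements a with lambda_g a ∈ G for
   all g ∈ G form a sub-brace, as a + b = a ∘ lambda_(a^-) b.  It contains f y for y ∈ Y,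
   so it is B(f y) = B, and then f X = {lambda_b (f y)} ⊆ f Y.
   (1) => (2): B is the structure brace of X (integer vectors on X, lambda_a permuting
   coordinates) reduced mod N, and x ↦ e_x.  The permutation attached to a vector is
   computed along any word with these letter counts: the cycle-set identity makes it
   independent of the order of the letters, and N is chosen so that it only depends on the
   counts mod N.  Irreducibility then applies twice: to the lambda-orbit of e_x, and to
   the generators lying in a sub-brace containing e_x. *)

From HB Require Import structures.
From mathcomp Require Import all_boot fingroup perm ssralg zmodp zify.
Set Implicit Arguments. Unset Strict Implicit. Unset Printing Implicit Defensive.
Import GRing.Theory.

Definition bzmod (B : fin_brace) : Type := B.
HB.instance Definition _ (B : fin_brace) := Choice.on (bzmod B).
HB.instance Definition _ (B : fin_brace) :=
  GRing.isZmodule.Build (bzmod B) (@baddA B) (@baddC B) (@badd0 B) (@baddN B).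

Lemma imset_stable_inj (T : finType) (A : {set T}) (h : T -> T) :
  {in A, forall x, h x \in A} -> {in A &, injective h} -> h @: A = A.
Proof.
move=> hA h_inj; apply/eqP; rewrite eqEcard card_in_imset // leqnn andbT.
by apply/subsetP => _ /imsetP [x xA ->]; apply: hA.
Qed.

Section BraceTheory.
Variable B : fin_brace.
Local Open Scope ring_scope.
Implicit Types (a b c : bzmod B) (S : {set B}).
Local Notation "a ∘ b" := (@bcirc B (a : bzmod B) (b : bzmod B) : bzmod B)
  (at level 40, left associativity).
Local Notation lam a b := (@blambda B (a : bzmod B) (b : bzmod B) : bzmod B).
Local Notation inv a := (@binv B (a : bzmod B) : bzmod B).

Lemma blambdaE a b : lam a b = - a + a ∘ b.
Proof. by []. Qed.

Lemma bcircDr a b c : a ∘ (b + c) = a ∘ b - a + a ∘ c.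
Proof. exact: bcomp. Qed.

Lemma bcirc0 a : a ∘ 0 = a.
Proof.
have := bcircDr a 0 0; rewrite addr0 -addrA -{1}(addr0 (a ∘ 0)) => /addrI/eqP.
by rewrite eq_sym addrC subr_eq0 => /eqP.
Qed.

Lemma bone0 : bone B = 0 :> bzmod B.
Proof. by rewrite -[bone B](bcirc0 (bone B)) bcirc1. Qed.

Lemma bcirc0l a : 0 ∘ a = a.
Proof. by rewrite -bone0 bcirc1. Qed.

Lemma bcircVl a : inv a ∘ a = 0.
Proof. by rewrite bcircV bone0. Qed.

Lemma binvK a : inv (inv a) = a.
Proof. by rewrite -[inv (inv a)]bcirc0 -(bcircVl a) bcircA bcircVl bcirc0l. Qed.

Lemma bcircVr a : a ∘ inv a = 0.
Proof. by rewrite -{1}(binvK a) bcircVl. Qed.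

Lemma bcirc_lambda a b : a ∘ b = a + lam a b.
Proof. by rewrite blambdaE addNKr. Qed.

Lemma blambdaD a b c : lam a (b + c) = lam a b + lam a c.
Proof. by rewrite !blambdaE bcircDr !addrA. Qed.

Lemma blambda0 a : lam a 0 = 0.
Proof. by rewrite blambdaE bcirc0 addNr. Qed.

Lemma blambda0l b : lam 0 b = b.
Proof. by rewrite blambdaE bcirc0l oppr0 add0r. Qed.

Lemma blambdaN a b : lam a (- b) = - lam a b.
Proof. by apply/eqP; rewrite -subr_eq0 opprK -blambdaD addNr blambda0. Qed.

Lemma blambdaM a b c : lam (a ∘ b) c = lam a (lam b c).
Proof.
rewrite [lam b c]blambdaE blambdaD blambdaN !blambdaE bcircA opprD opprK.
by rewrite addrA [a - _]addrC addrK.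
Qed.

Lemma blambdaK a c : lam (inv a) (lam a c) = c.
Proof. by rewrite -blambdaM bcircVl blambda0l. Qed.

Lemma blambdaKV a c : lam a (lam (inv a) c) = c.
Proof. by rewrite -blambdaM bcircVr blambda0l. Qed.

Lemma binv_lambda a : inv a = - lam (inv a) a.
Proof. by apply/eqP; rewrite -addr_eq0 -bcirc_lambda bcircVl. Qed.

Lemma blambdaV_stable S a :
  {in S, forall s, lam a s \in S} -> {in S, forall s, lam (inv a) s \in S}.
Proof.
move=> aS s; rewrite -{1}(imset_stable_inj aS (in2W (can_inj (blambdaK a)))).
by case/imsetP => t tS ->; rewrite blambdaK.
Qed.

Lemma subbrace_lambda_closed S :
  (0 : bzmod B) \in S -> {in S &, forall a b, a + b \in S} ->
  {in S &, forall a b, lam a b \in S} -> is_subbrace S.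
Proof.
move=> S0 SD Slam.
have SN a : a \in S -> - a \in S.
  move=> aS; have aD_inj : {in S &, injective (fun b => a + b)} by move=> ? ? _ _ /addrI.
  have : (0 : bzmod B) \in (fun b => a + b) @: S.
    by rewrite (imset_stable_inj (fun b => SD a b aS) aD_inj).
  by case/imsetP => b bS /esym/(canRL (addKr a)); rewrite addr0 => <-.
apply/and5P; split=> //; first by rewrite bone0.
- by apply/forall_inP => a aS; apply/forall_inP => b bS; apply: SD.
- by apply/forall_inP => a aS; apply: SN.
apply/andP; split; apply/forall_inP => a aS.
  by apply/forall_inP => b bS; rewrite bcirc_lambda SD ?Slam.
by rewrite binv_lambda SN // (blambdaV_stable (fun b => Slam a b aS)).
Qed.

Lemma brace_gen_min S x : is_subbrace S -> x \in S -> brace_gen x \subset S.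
Proof. by move=> subS xS; apply: bigcap_min (subxx S); rewrite subS xS. Qed.

Lemma subbrace0 S : is_subbrace S -> (0 : bzmod B) \in S.
Proof. by case/and5P. Qed.

Lemma subbraceD S : is_subbrace S -> {in S &, forall a b, a + b \in S}.
Proof. by case/and5P => _ _ /forall_inP SD _ _ a b /SD /forall_inP; apply. Qed.

Lemma subbrace_dot S : is_subbrace S -> {in S &, forall a b, bdot a b \in S}.
Proof.
move=> subS; case/and5P: (subS) => _ _ _ /forall_inP SN /andP [/forall_inP SM /forall_inP SV].
move=> a b aS bS; rewrite /bdot blambdaE (subbraceD subS) ?SN ?SV //.
by move/forall_inP: (SM _ (SV _ aS)); apply.
Qed.

Definition lambda_stab S : {set B} := [set g : B | [forall s in S, blambda g s \in S]].

Lemma lambda_stabP S g : reflect {in S, forall s, lam g s \in S} (g \in lambda_stab S).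
Proof. by rewrite inE; apply: forall_inP. Qed.

Lemma lambda_stab0 S : (0 : bzmod B) \in lambda_stab S.
Proof. by apply/lambda_stabP => s sS; rewrite blambda0l. Qed.

Lemma lambda_stabM S : {in lambda_stab S &, forall g h, g ∘ h \in lambda_stab S}.
Proof.
move=> g h /lambda_stabP gS /lambda_stabP hS; apply/lambda_stabP => s sS.
by rewrite blambdaM gS ?hS.
Qed.

Lemma lambda_stabV S : {in lambda_stab S, forall g, inv g \in lambda_stab S}.
Proof. by move=> g /lambda_stabP gS; apply/lambda_stabP; apply: blambdaV_stable. Qed.

Definition lambda_core (G : {set B}) : {set B} :=
  [set a : B | [forall g in G, blambda g a \in G]].

Section LambdaCore.
Variable G : {set B}.
Hypotheses (G0 : (0 : bzmod B) \in G) (GM : {in G &, forall g h, g ∘ h \in G})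
  (GV : {in G, forall g, inv g \in G}).

Lemma lambda_coreP a : reflect {in G, forall g, lam g a \in G} (a \in lambda_core G).
Proof. by rewrite inE; apply: forall_inP. Qed.

Lemma lambda_core_sub : {subset lambda_core G <= G}.
Proof. by move=> a /lambda_coreP /(_ _ G0); rewrite blambda0l. Qed.

Lemma lambda_core_lambda g a : g \in G -> a \in lambda_core G -> lam g a \in lambda_core G.
Proof.
move=> gG /lambda_coreP aG; apply/lambda_coreP => h hG.
by rewrite -blambdaM aG ?GM.
Qed.

Lemma lambda_core_subbrace : is_subbrace (lambda_core G).
Proof.
have core_G := lambda_core_sub.
apply: subbrace_lambda_closed => [|a b aA bA|a b aA bA].
- by apply/lambda_coreP => g gG; rewrite blambda0.
- apply/lambda_coreP => g gG; rewrite blambdaD.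
  have a'A := lambda_core_lambda gG aA; have b'A := lambda_core_lambda gG bA.
  set a' := lam g a in a'A *; set b' := lam g b in b'A *.
  rewrite -[b'](blambdaKV a') -bcirc_lambda GM ?core_G //.
  by rewrite lambda_core_lambda ?GV ?core_G.
- exact: lambda_core_lambda (core_G a aA) bA.
Qed.

End LambdaCore.

End BraceTheory.

Section EmbeddedCycleSet.
Variables (X : finType) (op : X -> X -> X) (B : fin_brace) (f : X -> B).
Hypotheses (f_inj : injective f) (f_hom : forall x y, f (op x y) = bdot (f x) (f y)).

Lemma image_sub_lambda_stab (Y : {set X}) :
  (forall x y, x \in Y -> y \in Y -> op x y \in Y) -> f @: Y \subset lambda_stab (f @: Y).
Proof.
move=> Ycl; apply/subsetP => _ /imsetP [z zY ->]; rewrite -[f z](binvK (B := B)).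
apply: lambda_stabV; apply/lambda_stabP => _ /imsetP [z' z'Y ->].
by rewrite -/(bdot (f z) (f z')) -f_hom imset_f ?Ycl.
Qed.

Theorem irreducible_of_brace_embedding :
  (forall x : X, [set f y | y : X] = [set blambda b (f x) | b : B] /\
     brace_gen (f x) = setT) ->
  irreducible_cs op.
Proof.
move=> f_orbit_gen Y [Ycl _].
have [->|[y yY]] := set_0Vmem Y; [by left | right].
set G := lambda_stab (f @: Y).
have YG := subsetP (image_sub_lambda_stab Ycl).
have coreT : lambda_core G = setT.
  apply/eqP; rewrite eqEsubset subsetT -(proj2 (f_orbit_gen y)) /=.
  apply: brace_gen_min.
    exact/lambda_core_subbrace/lambda_stabV/lambda_stabM/lambda_stab0.
  by apply/lambda_coreP => g /lambda_stabP gY; rewrite YG ?gY ?imset_f.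
apply/setP => x; rewrite inE -(mem_imset _ _ f_inj).
have : f x \in [set f y | y : X] by rewrite imset_f.
rewrite (proj1 (f_orbit_gen y)) => /imsetP [b _ ->].
have /lambda_stabP bG : b \in G by rewrite (lambda_core_sub (lambda_stab0 _)) ?coreT ?inE.
by rewrite bG ?imset_f.
Qed.

End EmbeddedCycleSet.

Lemma foldl_perm (T : eqType) (R : Type) (f : R -> T -> R) :
  (forall r x y, f (f r x) y = f (f r y) x) ->
  forall r s1 s2, perm_eq s1 s2 -> foldl f r s1 = foldl f r s2.
Proof.
move=> fC; have foldl_f r x u : foldl f (f r x) u = f (foldl f r u) x.
  by elim: u r => //= y u IHu r; rewrite fC IHu.
move=> r s1; elim: s1 r => [|x s1 IHs] r s2; first by rewrite perm_sym => /perm_nilP ->.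
move=> eq_s12; have x_s2 : x \in s2 by rewrite -(perm_mem eq_s12) mem_head.
move: eq_s12; case/splitPr: x_s2 => u v.
rewrite perm_sym -[x :: v]cat1s perm_catCA /= perm_cons perm_sym => /IHs eq_s.
by rewrite foldl_cat /= -foldl_f -foldl_cat -eq_s.
Qed.

Lemma perm_eq_count_mem (T : eqType) (s1 s2 : seq T) :
  (forall z, count_mem z s1 = count_mem z s2) -> perm_eq s1 s2.
Proof. by move=> eq_count; apply/allP => z _; rewrite /= eq_count. Qed.

Section WordPerm.
Variables (X : finType) (op : X -> X -> X).
Hypothesis cs : is_cycle_set op.
Local Open Scope group_scope.
Implicit Types (g h : {perm X}) (u v w : seq X).

Definition sigma x : {perm X} := perm (bij_inj (proj1 cs x)).

Lemma sigmaE x y : sigma x y = op x y.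
Proof. by rewrite permE. Qed.

(* For a word [w] with letter counts [a], [word_perm w] is the permutation [s] by which
   [lambda_a] acts in the structure brace of [X]: [lambda_a (e x) = e (s^-1 x)]. *)
Definition word_act g w : {perm X} := foldl (fun g x => g * sigma (g x)) g w.
Definition word_perm w := word_act 1 w.

Lemma word_act_cat g u v : word_act g (u ++ v) = word_act (word_act g u) v.
Proof. exact: foldl_cat. Qed.

Lemma word_actM g h w : word_act (g * h) w = g * word_act h (map g w).
Proof. by elim: w g h => [|x w IHw] g h //=; rewrite permM -mulgA IHw. Qed.

Lemma word_perm_cat u v :
  word_perm (u ++ v) = word_perm u * word_perm (map (word_perm u) v).
Proof. by rewrite /word_perm word_act_cat -[word_act 1 u]mulg1 word_actM mulg1. Qed.

(* Swapping two adjacent letters is exactly the cycle-set identity. *)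
Lemma word_act_perm g w1 w2 : perm_eq w1 w2 -> word_act g w1 = word_act g w2.
Proof.
apply: foldl_perm => h x y; rewrite -!mulgA; congr (h * _); apply/permP => z.
by rewrite !permM !sigmaE; case: cs => _ ->.
Qed.

Lemma word_perm_perm w1 w2 : perm_eq w1 w2 -> word_perm w1 = word_perm w2.
Proof. exact: word_act_perm. Qed.

Lemma word_perm_cat1 u v : word_perm u = 1 -> word_perm (u ++ v) = word_perm v.
Proof. by move=> u1; rewrite word_perm_cat u1 mul1g (eq_map (@perm1 X)) map_id. Qed.

Lemma word_perm_map_eq1 k u :
  word_perm k = 1 -> word_perm (map (word_perm u) k) = 1.
Proof.
move=> k1; apply: (mulgI (word_perm u)); rewrite mulg1 -word_perm_cat.
by rewrite (word_perm_perm (permEl (perm_catC u k))) word_perm_cat1.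
Qed.

Lemma word_perm_map_expg_eq1 k u m :
  word_perm k = 1 -> word_perm (map (word_perm u ^+ m) k) = 1.
Proof.
elim: m k => [|m IHm] k k1; first by rewrite expg0 (eq_map (@perm1 X)) map_id.
by rewrite expgS (eq_map (permM _ _)) map_comp IHm ?word_perm_map_eq1.
Qed.

Lemma word_perm_nseq_period y :
  exists2 d, 0 < d <= #|{perm X}| & word_perm (nseq d y) = 1.
Proof.
pose f (i : 'I_#|{perm X}|.+1) := word_perm (nseq i y).
have /injectivePn [i [j neq_ij eq_f]] : ~~ injectiveb f.
  by apply/injectiveP => /leq_card; rewrite card_ord ltnn.
wlog lt_ij : i j neq_ij eq_f / i < j.
  move=> wlog_ij; case: (ltngtP i j) => [|gt_ij|/val_inj eq_ij]; first exact: wlog_ij.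
    by apply: (wlog_ij j i); rewrite 1?eq_sym.
  by rewrite eq_ij eqxx in neq_ij.
exists (j - i); first by rewrite subn_gt0 lt_ij (leq_trans (leq_subr _ _)) // -ltnS.
set g := f i.
have : word_perm (map g (nseq (j - i) y)) = 1.
  by apply: (mulgI g); rewrite mulg1 -word_perm_cat -nseqD subnKC ?(ltnW lt_ij).
move/(word_perm_map_expg_eq1 (nseq i y) #[g].-1); rewrite -map_comp map_nseq /=.
by rewrite -permM -expgS prednK ?order_gt0 // expg_order perm1.
Qed.

(* A common multiple of the periods of [word_perm_nseq_period]. *)
Definition word_modulus := (#|{perm X}|.+1)`!.

Lemma word_modulus_gt1 : 1 < word_modulus.
Proof.
have : 0 < #|{perm X}| by apply/card_gt0P; exists 1.
by rewrite /word_modulus factS; have := fact_gt0 #|{perm X}|; nia.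
Qed.

Lemma word_perm_nseq_modulus y q : word_perm (nseq (word_modulus * q)%N y) = 1.
Proof.
have [d /andP [d_gt0 d_le] yd1] := word_perm_nseq_period y.
have /divnK <- : d %| word_modulus by rewrite dvdn_fact // d_gt0 leqW.
rewrite mulnAC mulnC; elim: (_ * q)%N => [|n IHn]; first by rewrite muln0.
by rewrite mulnS nseqD word_perm_cat1.
Qed.

Definition count_word (c : X -> nat) := flatten [seq nseq (c y) y | y <- enum X].

Lemma count_mem_count_word c z : count_mem z (count_word c) = c z.
Proof.
rewrite count_flatten -map_comp sumnE big_map big_enum /= (bigD1 z) //=.
rewrite count_nseq /= eqxx mul1n big1 ?addn0 // => y /negbTE yz.
by rewrite count_nseq /= yz mul0n.
Qed.

Lemma word_perm_modulus_cat c u :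
  word_perm (count_word (fun z => word_modulus * c z)%N ++ u) = word_perm u.
Proof.
rewrite /count_word; elim: (enum X) => [|y s IHs] //=.
by rewrite -catA word_perm_cat1 ?word_perm_nseq_modulus.
Qed.

Lemma word_perm_mod w :
  word_perm w = word_perm (count_word (fun z => count_mem z w %% word_modulus)).
Proof.
rewrite -(word_perm_modulus_cat (fun z => count_mem z w %/ word_modulus) (count_word _)).
apply: word_perm_perm; apply: perm_eq_count_mem => z.
by rewrite count_cat !count_mem_count_word mulnC -divn_eq.
Qed.

Lemma word_perm_eq_mod w1 w2 :
  (forall z, count_mem z w1 = count_mem z w2 %[mod word_modulus]) ->
  word_perm w1 = word_perm w2.
Proof.
move=> eq_w; rewrite word_perm_mod [RHS]word_perm_mod /count_word.
by congr (word_perm (flatten _)); apply: eq_map => z; rewrite eq_w.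
Qed.

End WordPerm.

Lemma count_mem_map_perm (T : finType) (h : {perm T}) z (s : seq T) :
  count_mem z (map h s) = count_mem ((h^-1)%g z) s.
Proof.
rewrite count_map; apply: eq_count => y /=.
by rewrite -(inj_eq (@perm_inj _ h^-1%g)) permK.
Qed.

Section StructureBrace.
Variables (X : finType) (op : X -> X -> X).
Hypothesis cs : is_cycle_set op.
Local Open Scope ring_scope.
Local Notation N := (word_modulus X).

Lemma closed_sub_cycle_set (Y : {set X}) :
  (forall x y, x \in Y -> y \in Y -> op x y \in Y) -> is_sub_cycle_set op Y.
Proof.
have [op_bij op_cyc] := cs; have op_inj x := bij_inj (op_bij x).
move=> Ycl; split=> [//|]; split=> [x _ u v _ _ /op_inj //|]; split=> [x xY z zY|].
  rewrite -(imset_stable_inj (Ycl x^~ xY) (in2W (op_inj x))) in zY.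
  by case/imsetP: zY => y; exists y.
by move=> x y z _ _ _; apply: op_cyc.
Qed.

Definition cs_vec := {ffun X -> 'Z_N}.
Implicit Types a b c : cs_vec.

Lemma val_ZpD (m n : 'Z_N) : (m + n : 'Z_N) = (m + n) %% N :> nat.
Proof.
by rewrite [LHS]/=; congr (_ %% _)%N; apply: Zp_cast; apply: word_modulus_gt1.
Qed.

Definition vec_perm a : {perm X} := word_perm cs (count_word (fun y => a y : nat)).
Definition vec_lambda a b : cs_vec := [ffun z => b (vec_perm a z)].

Lemma vec_perm0 : vec_perm 0 = 1%g.
Proof.
rewrite /vec_perm (word_perm_perm cs (w2 := [::])) //.
by apply: perm_eq_count_mem => z; rewrite count_mem_count_word ffunE.
Qed.

Lemma vec_perm_circ a b : vec_perm (a + vec_lambda a b) = (vec_perm a * vec_perm b)%g.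
Proof.
set g := vec_perm a.
have -> : vec_perm (a + vec_lambda a b) =
    word_perm cs (count_word (fun y => a y : nat) ++
                  map g^-1%g (count_word (fun y => b y : nat))).
  apply: word_perm_eq_mod => z; rewrite count_cat count_mem_map_perm invgK.
  by rewrite !count_mem_count_word !ffunE val_ZpD modn_mod.
by rewrite word_perm_cat -map_comp (eq_map (permKV g)) map_id.
Qed.

Definition vec_circ a b := a + vec_lambda a b.
Definition vec_inv a : cs_vec := [ffun z => - a ((vec_perm a)^-1%g z)].

Lemma vec_lambdaD a b c : vec_lambda a (b + c) = vec_lambda a b + vec_lambda a c.
Proof. by apply/ffunP => z; rewrite !ffunE. Qed.

Lemma vec_lambda0 a : vec_lambda a 0 = 0.
Proof. by apply/ffunP => z; rewrite !ffunE. Qed.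

Lemma vec_lambda0l c : vec_lambda 0 c = c.
Proof. by apply/ffunP => z; rewrite !ffunE vec_perm0 perm1. Qed.

Lemma vec_lambdaM a b c : vec_lambda (vec_circ a b) c = vec_lambda a (vec_lambda b c).
Proof. by apply/ffunP => z; rewrite !ffunE vec_perm_circ permM. Qed.

Lemma vec_circA a b c : vec_circ a (vec_circ b c) = vec_circ (vec_circ a b) c.
Proof. by rewrite /vec_circ vec_lambdaD vec_lambdaM addrA. Qed.

Lemma vec_circ0l a : vec_circ 0 a = a.
Proof. by rewrite /vec_circ add0r vec_lambda0l. Qed.

Lemma vec_circ0 a : vec_circ a 0 = a.
Proof. by rewrite /vec_circ vec_lambda0 addr0. Qed.

Lemma vec_circVr a : vec_circ a (vec_inv a) = 0.
Proof.
rewrite /vec_circ.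
have -> : vec_lambda a (vec_inv a) = - a by apply/ffunP => z; rewrite !ffunE permK.
by rewrite subrr.
Qed.

Lemma vec_circVl a : vec_circ (vec_inv a) a = 0.
Proof.
have vec_invK : vec_inv (vec_inv a) = a.
  by rewrite -[LHS]vec_circ0l -(vec_circVr a) -vec_circA vec_circVr vec_circ0.
by rewrite -{2}vec_invK vec_circVr.
Qed.

Lemma vec_circDr a b c : vec_circ a (b + c) = vec_circ a b - a + vec_circ a c.
Proof. by rewrite /vec_circ vec_lambdaD [a + vec_lambda a b]addrC addrK addrCA. Qed.

Definition cs_brace : fin_brace :=
  @FinBrace cs_vec +%R 0 -%R vec_circ 0 vec_inv
    (@addrA _) (@addrC _) (@add0r _) (@addNr _) vec_circA vec_circ0l vec_circVl vec_circDr.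

Definition vec_gen x : cs_vec := [ffun y => (y == x)%:R].

Lemma blambda_cs_brace b a : @blambda cs_brace b a = vec_lambda b a.
Proof. exact: addKr. Qed.

Lemma vec_gen_inj : injective vec_gen.
Proof.
move=> x y /ffunP /(_ x); rewrite !ffunE eqxx.
by case: eqP => // _ /eqP; rewrite oner_eq0.
Qed.

Lemma vec_perm_gen x : vec_perm (vec_gen x) = sigma cs x.
Proof.
rewrite /vec_perm (word_perm_perm cs (w2 := [:: x])).
  by rewrite /word_perm /word_act /= mul1g perm1.
apply: perm_eq_count_mem => z; rewrite count_mem_count_word ffunE.
rewrite val_Zp_nat ?word_modulus_gt1 // modn_small.
  by rewrite [RHS]/= addn0 eq_sym.
exact: leq_ltn_trans (leq_b1 _) (word_modulus_gt1 X).
Qed.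

Lemma vec_lambda_gen b x : vec_lambda b (vec_gen x) = vec_gen ((vec_perm b)^-1%g x).
Proof.
apply/ffunP => z; rewrite !ffunE; congr (_ %:R).
by rewrite -(inj_eq (@perm_inj _ (vec_perm b)^-1%g)) permK.
Qed.

Lemma vec_gen_dot x y : vec_gen (op x y) = @bdot cs_brace (vec_gen x) (vec_gen y).
Proof.
rewrite /bdot -[vec_gen y in RHS](_ : @blambda cs_brace (vec_gen x) (vec_gen (op x y)) = _).
  by rewrite (blambdaK (B := cs_brace)).
rewrite blambda_cs_brace vec_lambda_gen vec_perm_gen; congr vec_gen.
by apply: (bij_inj (proj1 cs x)); rewrite -sigmaE permKV.
Qed.

Section Irreducible.
Hypothesis irr : irreducible_cs op.

Lemma irreducible_closed_setT (Y : {set X}) x :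
  x \in Y -> (forall u v, u \in Y -> v \in Y -> op u v \in Y) -> Y = setT.
Proof.
move=> xY /closed_sub_cycle_set /irr [Y0|//].
by rewrite Y0 inE in xY.
Qed.

Lemma vec_gen_orbit x :
  [set vec_gen y | y : X] = [set blambda b (vec_gen x) | b : cs_brace].
Proof.
apply/setP => v; apply/imsetP/imsetP => [[y _ ->]|[b _ ->]]; last first.
  by exists ((vec_perm b)^-1%g x); rewrite ?blambda_cs_brace ?vec_lambda_gen.
pose O := [set y | [exists b : cs_brace, blambda b (vec_gen x) == vec_gen y]].
have : y \in O.
  rewrite (@irreducible_closed_setT O x) ?inE //.
    by apply/existsP; exists 0; rewrite blambda_cs_brace vec_lambda0l.
  move=> u w; rewrite !inE => _ /existsP [b /eqP bw].
  apply/existsP; exists (bcirc (binv (vec_gen u : cs_brace)) b).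
  by rewrite vec_gen_dot /bdot -bw (blambdaM (B := cs_brace)).
by rewrite inE => /existsP [b /eqP <-]; exists b.
Qed.

Lemma brace_gen_vec_gen x : brace_gen (vec_gen x : cs_brace) = setT.
Proof.
apply/setP => v; rewrite inE; apply/bigcapP => S /andP [subS xS].
have SD := subbraceD subS.
have genS y : (vec_gen y : cs_brace) \in S.
  set Y := [set y | (vec_gen y : cs_brace) \in S].
  have Ycl u w : u \in Y -> w \in Y -> op u w \in Y.
    by rewrite !inE vec_gen_dot; apply: subbrace_dot.
  have : y \in Y by rewrite (irreducible_closed_setT (x := x) _ Ycl) ?inE.
  by rewrite inE.
have -> : v = \sum_(y : X) vec_gen y *+ v y.
  apply/ffunP => z; rewrite sum_ffunE (bigD1 z) //= big1 => [|y /negbTE yz].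
    by rewrite addr0 ffunMnE ffunE eqxx natr_Zp.
  by rewrite ffunMnE ffunE eq_sym yz mul0rn.
apply: (big_ind (fun w : cs_vec => w \in S)) => // [|y _]; first exact: subbrace0.
by elim: (nat_of_ord _) => [|n IHn]; rewrite ?mulr0n ?(subbrace0 subS) // mulrS SD.
Qed.

End Irreducible.

End StructureBrace.

Theorem mainTheorem2 (X : finType) (op : X -> X -> X) :
  is_cycle_set op ->
  (irreducible_cs op <->
   exists (B : fin_brace) (f : X -> B),
     injective f /\
     (forall x y : X, f (op x y) = bdot (f x) (f y)) /\
     (forall x : X,
        [set f y | y : X] = [set blambda b (f x) | b : B] /\
        brace_gen (f x) = setT)).
Proof.
move=> cs; split=> [irr | [B [f [f_inj [f_hom f_orbit_gen]]]]].
  exists (cs_brace cs), (@vec_gen X : X -> cs_brace cs).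
  split; first exact: vec_gen_inj.
  split; first exact: vec_gen_dot.
  by move=> x; split; [exact: vec_gen_orbit | exact: brace_gen_vec_gen].
exact: irreducible_of_brace_embedding f_inj f_hom f_orbit_gen.
Qed.
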